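(* Let $f:\mathbb{N}\to\mathbb{R}$ with $f(1)=1$ be multiplicative (i.e. $f(mn)=f(m)f(n)$ for coprime $m,n$). Assume there exist $A>0$ and $c\in(0,1)$ such that $|f(n)|\leq A c^n$ for all $n\geq2$. Then $$|f^{-1}(n)| \leq \left(\frac{A}{A+1}\right)^{\omega(n)} (A+1)^{\Omega(n)} n^{\frac{3\ln c}{\ln 3}}, \quad n\geq 2.$$
   Context: $f^{-1}$ denotes the Dirichlet inverse of $f$: the arithmetic function with $\sum_{d\mid n} f(n/d) f^{-1}(d)=\varepsilon(n)$ for all $n$, where $\varepsilon(1)=1$ and $\varepsilon(n)=0$ for $n\ge2$. $\omega(n)$ is the number of distinct prime factors of $n$ and $\Omega(n)$ the number of prime factors counted with multiplicity. *)

From mathcomp Require Import all_boot all_order all_algebra.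
From mathcomp Require Import reals exp.
Set Implicit Arguments. Unset Strict Implicit. Unset Printing Implicit Defensive.
Import Order.TTheory GRing.Theory Num.Theory.
Local Open Scope ring_scope.

(* arithmetic functions are maps nat -> R; the value at 0 is irrelevant *)
Definition mult_arith (R : realType) (f : nat -> R) : Prop :=
  f 1%N = 1 /\ forall m n : nat, (0 < m)%N -> (0 < n)%N -> coprime m n ->
    f (m * n)%N = f m * f n.

Definition eps_fn (R : realType) (n : nat) : R := (n == 1%N)%:R.

Definition is_dirichlet_inverse (R : realType) (f g : nat -> R) : Prop :=
  forall n : nat, (0 < n)%N ->
    \sum_(d <- divisors n) f (n %/ d)%N * g d = eps_fn R n.

Definition omega (n : nat) : nat := size (primes n).
Definition bigOmega (n : nat) : nat := (\sum_(p <- primes n) logn p n)%N.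

From mathcomp Require Import all_boot all_order all_algebra.
From mathcomp Require Import reals exp.
From mathcomp Require Import zify ring.
Import Order.TTheory GRing.Theory Num.Theory.
Local Open Scope ring_scope.
Set Implicit Arguments. Unset Strict Implicit. Unset Printing Implicit Defensive.

(* The Dirichlet inverse g of a multiplicative f is again multiplicative, and
   so is the right-hand side B(n) of the bound, so |g| <= B need only be checked
   on prime powers.  There g(p^(k+1)) = - sum_(i <= k) f(p^(k+1-i)) g(p^i), and
   since m^3 <= 3^m the hypothesis gives |f(p^j)| <= A c^(p^j) <= A (p^j)^e
   with e = 3 ln c / ln 3.  Induction on k then yields
   |g(p^k)| <= A (A+1)^(k-1) p^(k e) = B(p^k), because
   A (1 + A + A (A+1) + ... + A (A+1)^(k-1)) = A (A+1)^k. *)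

Lemma coprime_pfactor_ind (P : nat -> Prop) :
  P 1%N -> (forall p k, prime p -> (0 < k)%N -> P (p ^ k)%N) ->
  (forall m n, (0 < m)%N -> (0 < n)%N -> coprime m n -> P m -> P n -> P (m * n)%N) ->
  forall n, (0 < n)%N -> P n.
Proof.
move=> P1 Ppk PM; elim/ltn_ind => n IH n0.
have [-> //|n_neq1] := eqVneq n 1%N.
have n_gt1 : (1 < n)%N by rewrite ltn_neqAle eq_sym n_neq1.
have p_pr := pdiv_prime n_gt1; set p := pdiv n in p_pr *.
have k_gt0 : (0 < logn p n)%N by rewrite logn_gt0 mem_primes p_pr n0 pdiv_dvd.
have pk_gt1 : (1 < p ^ logn p n)%N by rewrite -[1%N](expn0 p) ltn_exp2l ?prime_gt1.
have n_eq : n = (p ^ logn p n * n`_p^')%N by rewrite -p_part partnC.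
have r_gt0 : (0 < n`_p^')%N := part_gt0 _ _.
rewrite n_eq; apply: PM; rewrite ?expn_gt0 ?(prime_gt0 p_pr) //.
- by rewrite -p_part coprime_partC.
- exact: Ppk.
by apply: IH; rewrite // [in X in (_ < X)%N]n_eq ltn_Pmull.
Qed.

Lemma gcdn_mul_coprime m n d1 d2 : coprime m n -> (d1 %| m)%N -> (d2 %| n)%N ->
  gcdn (d1 * d2) m = d1.
Proof.
move=> cmn d1m d2n; rewrite gcdnC Gauss_gcdl ?(gcdn_idPr d1m) //.
by rewrite coprime_sym (coprime_dvdl d2n) // coprime_sym.
Qed.

Lemma divisorsM m n : (0 < m)%N -> (0 < n)%N -> coprime m n ->
  perm_eq (divisors (m * n))
          [seq (d1 * d2)%N | d1 <- divisors m, d2 <- divisors n].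
Proof.
move=> m0 n0 cmn; have cnm : coprime n m by rewrite coprime_sym.
apply: uniq_perm; first exact: divisors_uniq.
  have gcd_split u v : (u %| m)%N -> (v %| n)%N ->
      (u, v) = (gcdn (u * v) m, gcdn (u * v) n).
    move=> um vn; rewrite (gcdn_mul_coprime cmn um vn) mulnC.
    by rewrite (gcdn_mul_coprime cnm vn um).
  apply: allpairs_uniq; try exact: divisors_uniq.
  move=> [d1 d2] [e1 e2] /allpairsP[[x1 x2] [/= x1m x2n [-> ->]]].
  move=> /allpairsP[[y1 y2] [/= y1m y2n [-> ->]]] /= E.
  rewrite -!dvdn_divisors // in x1m x2n y1m y2n.
  by rewrite (gcd_split x1 x2) // (gcd_split y1 y2) // E.
move=> d; rewrite -dvdn_divisors ?muln_gt0 ?m0 //.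
apply/idP/allpairsP => [dmn|[[d1 d2] [/= + + ->]]]; last first.
  by rewrite -!dvdn_divisors // => d1m d2n; apply: dvdn_mul.
exists (gcdn d m, gcdn d n); rewrite /= -!dvdn_divisors // !dvdn_gcdr; split=> //.
apply/eqP; rewrite eqn_dvd; apply/andP; split.
  by rewrite muln_gcdl dvdn_gcd dvdn_mulr //= muln_gcdr dvdn_gcd dvdn_mull.
rewrite Gauss_dvd ?dvdn_gcdl //.
exact: coprime_dvdl (dvdn_gcdr _ _) (coprime_dvdr (dvdn_gcdr _ _) cmn).
Qed.

Lemma sum_divisorsM (V : nmodType) m n (F : nat -> V) :
  (0 < m)%N -> (0 < n)%N -> coprime m n ->
  \sum_(d <- divisors (m * n)) F d =
  \sum_(d1 <- divisors m) \sum_(d2 <- divisors n) F (d1 * d2)%N.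
Proof.
move=> m0 n0 cmn; rewrite (perm_big _ (divisorsM m0 n0 cmn)).
exact: (big_allpairs_dep (h := fun d1 d2 => (d1 * d2)%N)).
Qed.

Lemma sum_divisors_pfactor (V : nmodType) p k (F : nat -> V) : prime p ->
  \sum_(d <- divisors (p ^ k)) F d = \sum_(i < k.+1) F (p ^ i)%N.
Proof.
move=> p_pr; rewrite -(big_mkord xpredT (fun i => F (p ^ i)%N)).
rewrite -(big_map (expn p) xpredT).
apply: perm_big; apply: uniq_perm.
- exact: divisors_uniq.
- by rewrite map_inj_uniq ?iota_uniq //; apply: expnI; rewrite prime_gt1.
move=> d; rewrite -dvdn_divisors ?expn_gt0 ?prime_gt0 //.
apply/(dvdn_pfactor _ _ p_pr)/mapP => -[i ik ->]; exists i => //;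
  by move: ik; rewrite mem_index_iota.
Qed.

Lemma perm_primesM m n : (0 < m)%N -> (0 < n)%N -> coprime m n ->
  perm_eq (primes (m * n)) (primes m ++ primes n).
Proof.
move=> m0 n0 cmn; apply: uniq_perm.
- exact: primes_uniq.
- by rewrite cat_uniq !primes_uniq andbT -coprime_has_primes.
by move=> p; rewrite primesM // mem_cat.
Qed.

Lemma omegaM m n : (0 < m)%N -> (0 < n)%N -> coprime m n ->
  omega (m * n) = (omega m + omega n)%N.
Proof.
by move=> m0 n0 cmn; rewrite /omega (perm_size (perm_primesM m0 n0 cmn)) size_cat.
Qed.

Lemma bigOmegaM m n : (0 < m)%N -> (0 < n)%N -> coprime m n ->
  bigOmega (m * n) = (bigOmega m + bigOmega n)%N.
Proof.
move=> m0 n0 cmn; have cnm : coprime n m by rewrite coprime_sym.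
have logn_other a b p : (0 < a)%N -> (0 < b)%N -> coprime a b ->
    p \in primes a -> logn p b = 0%N.
  move=> a0 b0 cab pa; apply/eqP; rewrite eqn0Ngt logn_gt0.
  rewrite coprime_has_primes // in cab.
  by apply: contra cab => pb; apply/hasP; exists p.
rewrite /bigOmega (perm_big _ (perm_primesM m0 n0 cmn)) big_cat /=.
congr addn; apply: eq_big_seq => p p_dvd; rewrite lognM //.
  by rewrite (logn_other m n) ?addn0.
by rewrite (logn_other n m).
Qed.

Lemma omega_pfactor p k : prime p -> (0 < k)%N -> omega (p ^ k) = 1%N.
Proof. by move=> p_pr k0; rewrite /omega primesX // primes_prime. Qed.

Lemma bigOmega_pfactor p k : prime p -> (0 < k)%N -> bigOmega (p ^ k) = k.
Proof.
by move=> p_pr k0; rewrite /bigOmega primesX // primes_prime // big_seq1 pfactorK.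
Qed.

Lemma eps_fnM (R : realType) m n : eps_fn R (m * n) = eps_fn R m * eps_fn R n.
Proof. by rewrite /eps_fn muln_eq1 -natrM mulnb. Qed.

Lemma mult_arith_divnM (R : realType) (f : nat -> R) m n d1 d2 :
  mult_arith f -> (0 < m)%N -> (0 < n)%N -> coprime m n ->
  (d1 %| m)%N -> (d2 %| n)%N ->
  f ((m * n) %/ (d1 * d2))%N = f (m %/ d1)%N * f (n %/ d2)%N.
Proof.
move=> [_ fM] m0 n0 cmn d1m d2n.
have [d1_gt0 d2_gt0] := (dvdn_gt0 m0 d1m, dvdn_gt0 n0 d2n).
rewrite -{1}(divnK d1m) -{1}(divnK d2n) mulnACA mulnK ?muln_gt0 ?d1_gt0 //.
rewrite fM ?divn_gt0 ?(dvdn_leq m0 d1m) ?(dvdn_leq n0 d2n) //.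
exact: coprime_dvdl (dvdn_div d1m) (coprime_dvdr (dvdn_div d2n) cmn).
Qed.

Lemma mult_norm_le (R : realType) (g B : nat -> R) :
  mult_arith g -> mult_arith B ->
  (forall p k, prime p -> (0 < k)%N -> `|g (p ^ k)%N| <= B (p ^ k)%N) ->
  forall n, (0 < n)%N -> `|g n| <= B n.
Proof.
move=> [g1 gM] [B1 BM] le_pfactor; apply: coprime_pfactor_ind => //.
  by rewrite g1 B1 normr1.
move=> m n m0 n0 cmn le_m le_n; rewrite gM // BM // normrM.
exact: ler_pM.
Qed.

Definition pfactor_coef (R : comPzRingType) (A : R) (k : nat) : R :=
  if k is k'.+1 then A * (A + 1) ^+ k' else 1.

Lemma sum_pfactor_coef (R : comPzRingType) (A : R) k :
  \sum_(i < k.+1) A * pfactor_coef A i = pfactor_coef A k.+1.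
Proof.
elim: k => [|k IH]; first by rewrite big_ord1 /= !mulr1.
by rewrite big_ord_recr /= IH /= exprS; ring.
Qed.

Section DirichletInverse.
Variable R : realType.
Variables f g : nat -> R.
Hypothesis f_mult : mult_arith f.
Hypothesis g_inv : is_dirichlet_inverse f g.

Lemma dirichlet_inverse1 : g 1%N = 1.
Proof.
have := g_inv (ltn0Sn 0); rewrite (_ : divisors 1 = [:: 1%N]) // big_seq1 divn1.
by case: f_mult => -> _; rewrite mul1r.
Qed.

Lemma dirichlet_inverse_defect m n : (0 < m)%N -> (0 < n)%N -> coprime m n ->
  \sum_(d1 <- divisors m) \sum_(d2 <- divisors n)
    f (m %/ d1)%N * f (n %/ d2)%N * (g (d1 * d2)%N - g d1 * g d2) = 0.
Proof.
move=> m0 n0 cmn.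
have conv_mn : \sum_(d1 <- divisors m) \sum_(d2 <- divisors n)
    f (m %/ d1)%N * f (n %/ d2)%N * g (d1 * d2)%N = eps_fn R (m * n).
  rewrite -g_inv ?muln_gt0 ?m0 // sum_divisorsM //.
  apply: eq_big_seq => d1; rewrite -dvdn_divisors // => d1m.
  apply: eq_big_seq => d2; rewrite -dvdn_divisors // => d2n.
  by rewrite mult_arith_divnM.
have conv_m_n : \sum_(d1 <- divisors m) \sum_(d2 <- divisors n)
    f (m %/ d1)%N * f (n %/ d2)%N * (g d1 * g d2) = eps_fn R m * eps_fn R n.
  rewrite -(g_inv m0) -(g_inv n0) big_distrlr /=.
  by apply: eq_bigr => d1 _; apply: eq_bigr => d2 _; ring.
under eq_bigr do rewrite (eq_bigr _ (fun d2 _ => mulrBr _ _ _)) sumrB.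
by rewrite sumrB conv_mn conv_m_n eps_fnM subrr.
Qed.

Lemma dirichlet_inverse_mult : mult_arith g.
Proof.
split=> [|m n]; first exact: dirichlet_inverse1.
(* Induction on m * n: all terms of the defect sum but d1 = m, d2 = n vanish. *)
have [N] := ubnP (m * n); elim: N m n => // N IH m n mn_le m0 n0 cmn.
have below_mn d e : d \in divisors m -> e \in divisors n -> (d != m) || (e != n) ->
    g (d * e)%N - g d * g e = 0.
  rewrite -!dvdn_divisors // => dm en ne.
  have [d0 e0] := (dvdn_gt0 m0 dm, dvdn_gt0 n0 en).
  have lt_mn : (d * e < m * n)%N.
    have [le_dm le_en] := (dvdn_leq m0 dm, dvdn_leq n0 en).
    have : (d < m)%N || (e < n)%N by rewrite !ltn_neqAle le_dm le_en !andbT.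
    by case/orP; nia.
  rewrite IH ?subrr //; first exact: leq_trans lt_mn _.
  exact: coprime_dvdl dm (coprime_dvdr en cmn).
have := dirichlet_inverse_defect m0 n0 cmn.
rewrite (bigD1_seq m) ?divisors_id ?divisors_uniq //=.
rewrite (bigD1_seq n) ?divisors_id ?divisors_uniq //=.
rewrite big1_seq => [|e /andP[ne en]]; last first.
  by rewrite below_mn ?divisors_id ?ne ?orbT ?mulr0.
rewrite big1_seq => [|d /andP[ne dm]]; last first.
  by rewrite big1_seq // => e /andP[_ en]; rewrite below_mn ?ne ?mulr0.
case: f_mult => f1 _; rewrite !divnn m0 n0 f1 !mul1r !addr0.
by move/eqP; rewrite subr_eq0 => /eqP.
Qed.

Lemma dirichlet_inverse_pfactorS p k : prime p ->
  g (p ^ k.+1)%N = - \sum_(i < k.+1) f (p ^ (k.+1 - i))%N * g (p ^ i)%N.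
Proof.
move=> p_pr; have pk_gt0 : (0 < p ^ k.+1)%N by rewrite expn_gt0 prime_gt0.
have := g_inv pk_gt0; rewrite sum_divisors_pfactor // big_ord_recr /= divnn pk_gt0.
have pk_neq1 : (p ^ k.+1 != 1)%N by rewrite -[1%N](expn0 p) eqn_exp2l ?prime_gt1.
case: f_mult => f1 _; rewrite f1 mul1r /eps_fn (negbTE pk_neq1) => /eqP.
rewrite addrC addr_eq0 => /eqP ->; congr (- _); apply: eq_bigr => i _.
by rewrite expnB ?prime_gt0 // ltnW.
Qed.

Lemma dirichlet_inverse_pfactor_le p (A x : R) : prime p ->
  (forall j, (0 < j)%N -> `|f (p ^ j)%N| <= A * x ^+ j) ->
  forall k, `|g (p ^ k)%N| <= pfactor_coef A k * x ^+ k.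
Proof.
move=> p_pr f_le; elim/ltn_ind => -[|k] IH.
  by rewrite expn0 dirichlet_inverse1 normr1 mul1r.
rewrite dirichlet_inverse_pfactorS // normrN -sum_pfactor_coef mulr_suml.
apply: le_trans (ler_norm_sum _ _ _) _; apply: ler_sum => i _.
have x_split : x ^+ k.+1 = x ^+ (k.+1 - i) * x ^+ i by rewrite -exprD subnK // ltnW.
rewrite normrM x_split mulrACA.
apply: ler_pM => //; first by rewrite f_le // subn_gt0.
exact: IH (ltn_ord i).
Qed.

End DirichletInverse.

Lemma cube_le_exp3 m : (m ^ 3 <= 3 ^ m)%N.
Proof.
elim: m => // m IH; have [|m_ge3] := leqP m 2; first by case: m {IH} => [|[|[|]]].
rewrite [(3 ^ _)%N]expnS; apply: leq_trans (leq_mul (leqnn 3) IH); rewrite !expnS expn0.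
have h1 : (3 * m <= m * m)%N by rewrite leq_mul2r m_ge3 orbT.
nia.
Qed.

Lemma expr_le_powR (R : realType) (c : R) m : 0 < c -> c < 1 -> (0 < m)%N ->
  c ^+ m <= m%:R `^ (3 * ln c / ln 3).
Proof.
move=> c0 c1 m0; have m_pos : (0 : R) < m%:R by rewrite ltr0n.
have ln3_gt0 : (0 : R) < ln 3 by rewrite ln_gt0 // ltr1n.
have lnc_lt0 : ln c < 0 by rewrite ln_lt0 // c0 c1.
have ln_cube : 3 * ln (m%:R : R) <= m%:R * ln 3.
  have cube_le : ln ((m%:R : R) ^+ 3) <= ln ((3 : R) ^+ m).
    rewrite ler_ln ?posrE ?exprn_gt0 ?ltr0n //.
    by rewrite -!natrX ler_nat cube_le_exp3.
  by rewrite !lnXn ?ltr0n // in cube_le; rewrite !mulr_natl.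
rewrite -[c in c ^+ _]lnK ?posrE // -expRM_natl /powR gt_eqF // ler_expR.
rewrite mulrAC ler_pdivlMr // [_ * ln c]mulrC [3 * _]mulrC -!mulrA ler_nM2l //.
Qed.

Lemma natrX_powR (R : realType) p k (e : R) :
  ((p ^ k)%N%:R) `^ e = (p%:R `^ e) ^+ k.
Proof.
by rewrite natrX -powR_mulrn ?ler0n // -powRrM mulrC powRrM powR_mulrn ?powR_ge0.
Qed.

Definition omega_majorant (R : realType) (A e : R) (n : nat) : R :=
  (A / (A + 1)) ^+ omega n * (A + 1) ^+ bigOmega n * n%:R `^ e.

Lemma omega_majorant_mult (R : realType) (A e : R) :
  mult_arith (omega_majorant A e).
Proof.
split=> [|m n m0 n0 cmn].
  rewrite /omega_majorant /omega /bigOmega (_ : primes 1 = [::]) // big_nil.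
  by rewrite !expr0 powR1 !mulr1.
rewrite /omega_majorant omegaM // bigOmegaM // !exprD natrM powRM ?ler0n //; ring.
Qed.

Lemma omega_majorant_pfactor (R : realType) (A e : R) p k :
  prime p -> (0 < k)%N -> A + 1 != 0 ->
  omega_majorant A e (p ^ k)%N = pfactor_coef A k * (p%:R `^ e) ^+ k.
Proof.
move=> p_pr k0 A1_neq0; rewrite /omega_majorant omega_pfactor // bigOmega_pfactor //.
rewrite natrX_powR; case: k k0 => // k _ /=.
by rewrite expr1 exprS mulrA divfK.
Qed.

Theorem proposition3p6 (R : realType) (f finv : nat -> R) (A c : R) :
  mult_arith f ->
  is_dirichlet_inverse f finv ->
  0 < A -> 0 < c -> c < 1 ->
  (forall n : nat, (2 <= n)%N -> `|f n| <= A * c ^+ n) ->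
  forall n : nat, (2 <= n)%N ->
    `|finv n| <= (A / (A + 1)) ^+ omega n * (A + 1) ^+ bigOmega n
                 * (n%:R) `^ (3 * ln c / ln 3).
Proof.
move=> f_mult finv_inv A_gt0 c_gt0 c_lt1 f_le n n_ge2.
apply: (mult_norm_le (dirichlet_inverse_mult f_mult finv_inv)
                     (omega_majorant_mult A (3 * ln c / ln 3))) (ltnW n_ge2).
move=> p k p_pr k_gt0.
rewrite omega_majorant_pfactor //; last by rewrite gt_eqF ?addr_gt0.
apply: (dirichlet_inverse_pfactor_le f_mult finv_inv) => // j j_gt0.
have pj_ge2 : (2 <= p ^ j)%N.
  by apply: leq_trans (prime_gt1 p_pr) _; rewrite -{1}(expn1 p) leq_exp2l ?prime_gt1.
apply: le_trans (f_le _ pj_ge2) _; rewrite ler_pM2l // -natrX_powR.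
by rewrite expr_le_powR // ltnW.
Qed.
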